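(* There exist constants $\rho_n$ ($n\ge0$) such that the following holds. Let $s,\delta>0$ be such that $1/s$ is an integer and $\delta<s/2$. Then there exists a $C^\infty$ diffeomorphism $A=A_{s,\delta}$ of $[0,1]$ such that: (1) $A=\mathrm{Id}+a$, where $a=a_{s,\delta}$ is a non-negative $C^\infty$ function of period $s$; (2) $A(0)=0$, $A(\delta)=s-\delta$, and $A(s)=s$; (3) $\delta/(2s)\le A'(x)\le 2s/\delta$ for all $x$; (4) for each $n\ge0$, $\|A\|_n\le\rho_n/\delta^{n^2}$, where $\rho_n$ does not depend on $\delta$ and $s$.
   Context: For a $C^n$ diffeomorphism $g$ of $[0,1]$, $\|g\|_n^*=\max|g^{(i)}(x)|$, the maximum over all $x\in[0,1]$ and $0\le i\le n$, and $\|g\|_n=\max\{\|g\|_n^*,\|g^{-1}\|_n^*\}$. *)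

From Stdlib Require Import Reals.
From Coquelicot Require Import Coquelicot.
Open Scope R_scope.

Definition smooth (f : R -> R) : Prop :=
  forall (n : nat) (x : R), ex_derive_n f n x.

(* g is a C^infinity diffeomorphism of [0,1] (restriction of the smooth map
   g : R -> R), with (global) smooth inverse h. *)
Definition diffeo01 (g h : R -> R) : Prop :=
  smooth g /\ smooth h /\
  (forall x, h (g x) = x) /\ (forall x, g (h x) = x) /\
  (forall x, 0 <= x <= 1 -> 0 <= g x <= 1) /\
  (forall x, 0 <= x <= 1 -> 0 <= h x <= 1).

Definition Cn_star_le (n : nat) (g : R -> R) (M : R) : Prop :=
  forall (i : nat) (x : R), (i <= n)%nat -> 0 <= x <= 1 ->
    Rabs (Derive_n g i x) <= M.

Definition Cn_le (n : nat) (g ginv : R -> R) (M : R) : Prop :=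
  Cn_star_le n g M /\ Cn_star_le n ginv M.

Definition periodic (a : R -> R) (s : R) : Prop :=
  forall x, a (x + s) = a x.

(* A = id + a, where a' is a combination of two s-periodic plateau bumps of transition width
   ~ delta, one pushing a up by s - 2 delta over [0, delta], the other bringing it back down
   over [delta, s]; then A' = 1 + a' lies in [delta/(2s), 2s/delta] and A is a diffeomorphism.
   The j-th derivative of each bump is O(delta^-j) and the first coefficient is O(1/delta), so
   A^(j+1) = O(delta^-(j+1)). The inverse h satisfies h' = r o h with r = 1/A', hence
   h^(i+1) = Q_i(r) o h for the operator Q_(i+1) = Q_i' r; and r solves r' = -A'' r^2. At every
   point at most one bump is active, which gives r^(j) = O(delta^(-2j-1)) and finally
   h^(i+1) = O(delta^(-3i-1)), within the claimed O(delta^(-(i+1)^2)). *)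

From Stdlib Require Import Reals Lra Lia List ZArith Ranalysis5 IndefiniteDescription.
From Coquelicot Require Import Coquelicot.
Open Scope R_scope.
Import ListNotations.

(** * Smooth functions *)

Lemma Derive_n_S f n x : Derive_n f (S n) x = Derive_n (Derive f) n x.
Proof.
  replace (S n) with (n + 1)%nat by lia.
  rewrite <- (Derive_n_comp f n 1). apply Derive_n_ext. reflexivity.
Qed.

Lemma ex_derive_n_S f n x :
  (forall y, ex_derive f y) -> ex_derive_n (Derive f) n x -> ex_derive_n f (S n) x.
Proof.
  intros Hf Hn. destruct n as [|n]; [apply Hf|].
  apply ex_derive_ext with (f := Derive_n (Derive f) n); [|exact Hn].
  intros t. symmetry. apply Derive_n_S.
Qed.

(* Smoothness of [1/u] is proved order by order, since [(1/u)' = -u' (1/u)^2]. *)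
Definition smooth_upto (n : nat) (f : R -> R) : Prop :=
  forall k x, (k <= n)%nat -> ex_derive_n f k x.

Lemma smooth_upto_all f : smooth f <-> forall n, smooth_upto n f.
Proof. split; [intros H n k x _; apply H | intros H n x; apply (H n); lia]. Qed.

Lemma smooth_upto_le m n f : (m <= n)%nat -> smooth_upto n f -> smooth_upto m f.
Proof. intros Hmn H k x Hk. apply H. lia. Qed.

Lemma smooth_upto_pred n f : smooth_upto (S n) f -> smooth_upto n f.
Proof. apply smooth_upto_le. lia. Qed.

Lemma smooth_upto_locally n f x : smooth_upto n f ->
  locally x (fun y => forall k, (k <= n)%nat -> ex_derive_n f k y).
Proof. intros H. apply filter_forall. intros y k Hk. now apply H. Qed.

Lemma smooth_upto_ex_derive n f : smooth_upto (S n) f -> forall x, ex_derive f x.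
Proof. intros H x. apply (H 1%nat). lia. Qed.

Lemma smooth_upto_Derive n f : smooth_upto (S n) f -> smooth_upto n (Derive f).
Proof.
  intros H k x Hk. destruct k as [|k]; [exact I|].
  apply ex_derive_ext with (f := Derive_n f (S k)).
  - intros t. apply Derive_n_S.
  - apply (H (S (S k))). lia.
Qed.

Lemma smooth_upto_of_Derive n f : (forall x, ex_derive f x) ->
  smooth_upto n (Derive f) -> smooth_upto (S n) f.
Proof.
  intros Hf H k x Hk. destruct k as [|k]; [exact I|].
  apply ex_derive_n_S; auto. apply H. lia.
Qed.

Lemma smooth_upto_ext n f g : (forall x, f x = g x) -> smooth_upto n f -> smooth_upto n g.
Proof. intros E H k x Hk. apply (ex_derive_n_ext f); auto. Qed.

Lemma smooth_upto_plus n f g :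
  smooth_upto n f -> smooth_upto n g -> smooth_upto n (fun x => f x + g x).
Proof.
  intros Hf Hg k x Hk.
  apply ex_derive_n_plus; apply smooth_upto_locally; apply (smooth_upto_le k n); auto.
Qed.

Lemma smooth_upto_opp n f : smooth_upto n f -> smooth_upto n (fun x => - f x).
Proof. intros H k x Hk. apply ex_derive_n_opp. auto. Qed.

Lemma smooth_upto_mult n : forall f g,
  smooth_upto n f -> smooth_upto n g -> smooth_upto n (fun x => f x * g x).
Proof.
  induction n as [|n IH]; intros f g Hf Hg.
  - intros k x Hk. replace k with 0%nat by lia. exact I.
  - assert (Df : forall x, ex_derive f x) by (eapply smooth_upto_ex_derive; eauto).
    assert (Dg : forall x, ex_derive g x) by (eapply smooth_upto_ex_derive; eauto).
    apply smooth_upto_of_Derive; [intros; now apply ex_derive_mult|].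
    apply (smooth_upto_ext n (fun x => Derive f x * g x + f x * Derive g x)).
    { intros x. symmetry. now apply Derive_mult. }
    apply smooth_upto_plus; apply IH; auto using smooth_upto_Derive, smooth_upto_pred.
Qed.

Lemma smooth_upto_inv n : forall u, (forall x, u x <> 0) ->
  smooth_upto n u -> smooth_upto n (fun x => / u x).
Proof.
  induction n as [|n IH]; intros u Hu H.
  - intros k x Hk. replace k with 0%nat by lia. exact I.
  - assert (Du : forall x, ex_derive u x) by (eapply smooth_upto_ex_derive; eauto).
    apply smooth_upto_of_Derive; [intros; now apply ex_derive_inv|].
    apply (smooth_upto_ext n (fun x => - (Derive u x * (/ u x * / u x)))).
    { intros x. rewrite Derive_inv; auto. field. auto. }
    apply smooth_upto_opp, smooth_upto_mult; auto using smooth_upto_Derive.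
    apply smooth_upto_mult; apply IH; auto using smooth_upto_pred.
Qed.

Lemma smooth_locally f n x : smooth f ->
  locally x (fun y => forall k, (k <= n)%nat -> ex_derive_n f k y).
Proof. intros H. apply smooth_upto_locally, smooth_upto_all, H. Qed.

Lemma smooth_ex_derive f x : smooth f -> ex_derive f x.
Proof. intros H. exact (H 1%nat x). Qed.

Lemma smooth_continuous f x : smooth f -> continuous f x.
Proof. intros H. apply (ex_derive_continuous f x), smooth_ex_derive, H. Qed.

Lemma smooth_Derive f : smooth f -> smooth (Derive f).
Proof.
  rewrite !smooth_upto_all. intros H n. apply smooth_upto_Derive, H.
Qed.

Lemma smooth_of_Derive f : (forall x, ex_derive f x) -> smooth (Derive f) -> smooth f.
Proof. intros Hf H [|n] x; [exact I|]. apply ex_derive_n_S; [exact Hf|apply H]. Qed.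

Lemma smooth_ext f g : (forall x, f x = g x) -> smooth f -> smooth g.
Proof. intros E H n x. apply (ex_derive_n_ext f); auto. Qed.

Lemma smooth_const c : smooth (fun _ => c).
Proof. intros n x. apply ex_derive_n_const. Qed.

Lemma smooth_id : smooth (fun x => x).
Proof.
  apply smooth_of_Derive; [intros; apply ex_derive_id|].
  apply (smooth_ext (fun _ => 1)); [intros; now rewrite Derive_id|apply smooth_const].
Qed.

Lemma smooth_plus f g : smooth f -> smooth g -> smooth (fun x => f x + g x).
Proof. intros Hf Hg n x. apply ex_derive_n_plus; now apply smooth_locally. Qed.

Lemma smooth_minus f g : smooth f -> smooth g -> smooth (fun x => f x - g x).
Proof. intros Hf Hg n x. apply ex_derive_n_minus; now apply smooth_locally. Qed.

Lemma smooth_scal a f : smooth f -> smooth (fun x => a * f x).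
Proof. intros Hf n x. now apply ex_derive_n_scal_l. Qed.

Lemma smooth_opp f : smooth f -> smooth (fun x => - f x).
Proof. intros Hf n x. now apply ex_derive_n_opp. Qed.

Lemma smooth_mult f g : smooth f -> smooth g -> smooth (fun x => f x * g x).
Proof.
  rewrite !smooth_upto_all. intros Hf Hg n. now apply smooth_upto_mult.
Qed.

Lemma smooth_inv u : (forall x, u x <> 0) -> smooth u -> smooth (fun x => / u x).
Proof.
  rewrite !smooth_upto_all. intros Hu H n. now apply smooth_upto_inv.
Qed.

Lemma smooth_comp_affine f a b : smooth f -> smooth (fun x => f (a * x + b)).
Proof.
  intros Hf n x. apply (ex_derive_n_comp_scal (fun z => f (z + b))).
  apply filter_forall. intros y k _. apply ex_derive_n_comp_trans, Hf.
Qed.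

Lemma Derive_n_comp_affine f a b n x : smooth f ->
  Derive_n (fun x => f (a * x + b)) n x = a ^ n * Derive_n f n (a * x + b).
Proof.
  intros Hf. rewrite (Derive_n_comp_scal (fun z => f (z + b))), Derive_n_comp_trans; auto.
  apply filter_forall. intros y k _. apply ex_derive_n_comp_trans, Hf.
Qed.

(** * Derivative estimates *)

Lemma Derive_n_mult_le n : forall f g x A B M X Y, smooth f -> smooth g ->
  (forall j, (j <= n)%nat -> Rabs (Derive_n f j x) <= A * M ^ j * X) ->
  (forall j, (j <= n)%nat -> Rabs (Derive_n g j x) <= B * M ^ j * Y) ->
  Rabs (Derive_n (fun y => f y * g y) n x) <= 2 ^ n * A * B * M ^ n * X * Y.
Proof.
  induction n as [|n IH]; intros f g x A B M X Y Hf Hg HF HG.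
  - simpl. rewrite Rabs_mult.
    specialize (HF 0%nat (le_n _)); specialize (HG 0%nat (le_n _)). simpl in *.
    replace (1 * A * B * 1 * X * Y) with ((A * 1 * X) * (B * 1 * Y)) by ring.
    apply Rmult_le_compat; auto using Rabs_pos.
  - rewrite Derive_n_S.
    rewrite (Derive_n_ext _ (fun y => Derive f y * g y + f y * Derive g y))
      by (intros; apply Derive_mult; now apply smooth_ex_derive).
    rewrite Derive_n_plus
      by (apply smooth_locally, smooth_mult; auto using smooth_Derive).
    eapply Rle_trans; [apply Rabs_triang|].
    replace (2 ^ S n * A * B * M ^ S n * X * Y)
      with (2 ^ n * A * B * M ^ n * (M * X) * Y + 2 ^ n * A * B * M ^ n * X * (M * Y))
      by (simpl; ring).
    assert (HF' : forall j, (j <= n)%nat -> Rabs (Derive_n (Derive f) j x) <= A * M ^ j * (M * X)).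
    { intros j Hj. rewrite <- Derive_n_S.
      replace (A * M ^ j * (M * X)) with (A * M ^ S j * X) by (simpl; ring). apply HF. lia. }
    assert (HG' : forall j, (j <= n)%nat -> Rabs (Derive_n (Derive g) j x) <= B * M ^ j * (M * Y)).
    { intros j Hj. rewrite <- Derive_n_S.
      replace (B * M ^ j * (M * Y)) with (B * M ^ S j * Y) by (simpl; ring). apply HG. lia. }
    apply Rplus_le_compat; apply IH; auto using smooth_Derive; intros j Hj;
      (apply HF || apply HG); lia.
Qed.

Lemma Derive_n_mult_le_upto n f g x A B M X Y : smooth f -> smooth g -> 0 <= M ->
  (forall j, (j <= n)%nat -> Rabs (Derive_n f j x) <= A * M ^ j * X) ->
  (forall j, (j <= n)%nat -> Rabs (Derive_n g j x) <= B * M ^ j * Y) ->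
  forall j, (j <= n)%nat ->
  Rabs (Derive_n (fun y => f y * g y) j x) <= 2 ^ n * A * B * M ^ j * X * Y.
Proof.
  intros Hf Hg HM HF HG j Hj.
  eapply Rle_trans; [apply (Derive_n_mult_le j); auto; intros i Hi; (apply HF || apply HG); lia|].
  assert (HAX : 0 <= A * X).
  { specialize (HF 0%nat (Nat.le_0_l _)). simpl in HF. pose proof (Rabs_pos (f x)). lra. }
  assert (HBY : 0 <= B * Y).
  { specialize (HG 0%nat (Nat.le_0_l _)). simpl in HG. pose proof (Rabs_pos (g x)). lra. }
  assert (0 <= (A * X) * (B * Y) * M ^ j)
    by (apply Rmult_le_pos; [now apply Rmult_le_pos|now apply pow_le]).
  assert (2 ^ j <= 2 ^ n) by (apply Rle_pow; lra || lia).
  replace (2 ^ j * A * B * M ^ j * X * Y) with (2 ^ j * ((A * X) * (B * Y) * M ^ j)) by ring.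
  replace (2 ^ n * A * B * M ^ j * X * Y) with (2 ^ n * ((A * X) * (B * Y) * M ^ j)) by ring.
  now apply Rmult_le_compat_r.
Qed.

Section Riccati.

Variables (u r : R -> R) (y M V R K : R).
Hypotheses (Hu : smooth u) (Hr : smooth r)
  (Hriccati : forall t, Derive r t = - (Derive u t * (r t * r t)))
  (HM : 0 <= M) (HR : 0 <= R) (HK : 0 <= K) (HVR : V * R <= 2 * M).

Lemma riccati_Derive_n_S_le k C :
  (forall j, (j <= k)%nat -> Rabs (Derive_n (Derive u) j y) <= K * M ^ j * V) ->
  (forall j, (j <= k)%nat -> Rabs (Derive_n r j y) <= C * M ^ j * R) ->
  Rabs (Derive_n r (S k) y) <= 2 ^ (2 * k + 1) * K * (C * C) * M ^ S k * R.
Proof.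
  intros Hu' Hrk.
  rewrite Derive_n_S, (Derive_n_ext _ _ _ _ Hriccati), Derive_n_opp, Rabs_Ropp.
  eapply Rle_trans.
  { apply (Derive_n_mult_le k _ _ _ K (2 ^ k * C * C) M V (R * R));
      auto using smooth_Derive, smooth_mult.
    intros i Hi. replace (2 ^ k * C * C * M ^ i * (R * R)) with (2 ^ k * C * C * M ^ i * R * R)
      by ring.
    now apply Derive_n_mult_le_upto. }
  assert (0 <= 2 ^ k * 2 ^ k * K * (C * C) * M ^ k * R).
  { assert (0 <= C * C) by nra.
    pose proof (pow_le 2 k ltac:(lra)). pose proof (pow_le M k HM).
    apply Rmult_le_pos; [|exact HR]. apply Rmult_le_pos; [|assumption].
    apply Rmult_le_pos; [|assumption]. apply Rmult_le_pos; [nra|exact HK]. }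
  replace (2 ^ k * K * (2 ^ k * C * C) * M ^ k * V * (R * R))
    with (2 ^ k * 2 ^ k * K * (C * C) * M ^ k * R * (V * R)) by ring.
  replace (2 ^ (2 * k + 1) * K * (C * C) * M ^ S k * R)
    with (2 ^ k * 2 ^ k * K * (C * C) * M ^ k * R * (2 * M))
    by (replace (2 * k + 1)%nat with (k + k + 1)%nat by lia; rewrite !pow_add; simpl; ring).
  now apply Rmult_le_compat_l.
Qed.

End Riccati.

(* The induction closes because [r^(k+1) = -(u' r^2)^(k)] and, as [V R <= 2 M], the factor
   [u' r] is worth at most one factor [M]. *)
Lemma riccati_Derive_n_le k K : 0 <= K -> exists C, 0 <= C /\
  forall u r y M V R, smooth u -> smooth r ->
  (forall t, Derive r t = - (Derive u t * (r t * r t))) ->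
  0 <= M -> 0 <= R -> V * R <= 2 * M ->
  (forall j, (j <= k)%nat -> Rabs (Derive_n (Derive u) j y) <= K * M ^ j * V) ->
  Rabs (r y) <= R ->
  forall j, (j <= k)%nat -> Rabs (Derive_n r j y) <= C * M ^ j * R.
Proof.
  intros HK. induction k as [|k [C [HC IH]]].
  - exists 1. split; [lra|]. intros u r y M V R _ _ _ _ _ _ _ Hr0 j Hj.
    replace j with 0%nat by lia. simpl. lra.
  - set (D := 2 ^ (2 * k + 1) * K * (C * C)).
    assert (HD : 0 <= D).
    { apply Rmult_le_pos; [apply Rmult_le_pos; [apply pow_le; lra|exact HK]|nra]. }
    exists (C + D). split; [lra|].
    intros u r y M V R Hu Hr Hric HM HR HVR Hu' Hr0 j Hj.
    assert (Hlow : forall i, (i <= k)%nat -> Rabs (Derive_n r i y) <= C * M ^ i * R).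
    { intros i Hi. apply (IH u r y M V R); auto. }
    assert (HMR : 0 <= M ^ j * R) by (apply Rmult_le_pos; auto using pow_le).
    destruct (Compare_dec.le_lt_dec j k) as [Hjk|Hjk].
    + eapply Rle_trans; [now apply Hlow|]. nra.
    + replace j with (S k) in * by lia.
      eapply Rle_trans; [apply (riccati_Derive_n_S_le u r y M V R K); auto|].
      fold D. nra.
Qed.

(* If [h' = r o h], then [h^(i+1) = flow_Derive r i o h]. *)
Fixpoint flow_Derive (r : R -> R) (i : nat) : R -> R :=
  match i with
  | O => r
  | S i => fun z => Derive (flow_Derive r i) z * r z
  end.

Lemma smooth_flow_Derive r i : smooth r -> smooth (flow_Derive r i).
Proof.
  intros Hr. induction i as [|i IH]; simpl; auto using smooth_mult, smooth_Derive.
Qed.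

Section Flow.

Variables (r h : R -> R).
Hypotheses (Hr : smooth r) (Hh : forall y, is_derive h y (r (h y))).

Lemma is_derive_Derive_n_flow i y : is_derive (Derive_n h i) y (flow_Derive r i (h y)).
Proof.
  revert y. induction i as [|i IH]; intros y; [apply Hh|].
  apply (is_derive_ext (fun t => flow_Derive r i (h t))).
  { intros t. symmetry. apply is_derive_unique, IH. }
  simpl. rewrite Rmult_comm.
  apply (is_derive_comp (flow_Derive r i) h); [|apply Hh].
  apply Derive_correct, smooth_ex_derive, smooth_flow_Derive, Hr.
Qed.

Lemma Derive_n_flow i y : Derive_n h (S i) y = flow_Derive r i (h y).
Proof. apply is_derive_unique, is_derive_Derive_n_flow. Qed.

Lemma smooth_flow : smooth h.
Proof. intros [|i] y; [exact I|]. eexists. apply is_derive_Derive_n_flow. Qed.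

End Flow.

Lemma flow_Derive_le i : forall k Cr, 0 <= Cr -> exists C, 0 <= C /\
  forall r M X z, smooth r -> 0 <= M ->
  (forall j, (j <= k + i)%nat -> Rabs (Derive_n r j z) <= Cr * M ^ j * X) ->
  forall j, (j <= k)%nat ->
  Rabs (Derive_n (flow_Derive r i) j z) <= C * M ^ j * ((M * X) ^ i * X).
Proof.
  induction i as [|i IH]; intros k Cr HCr.
  - exists Cr. split; auto. intros r M X z _ _ Hb j Hj. simpl.
    rewrite Rmult_1_l. apply Hb. lia.
  - destruct (IH (S k) Cr HCr) as [C [HC HCb]].
    exists (2 ^ k * C * Cr). split.
    { apply Rmult_le_pos; auto. apply Rmult_le_pos; auto. apply pow_le; lra. }
    intros r M X z Hr HM Hb j Hj. simpl flow_Derive.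
    replace (2 ^ k * C * Cr * M ^ j * ((M * X) ^ S i * X))
      with (2 ^ k * C * Cr * M ^ j * (M * ((M * X) ^ i * X)) * X) by (simpl; ring).
    apply Derive_n_mult_le_upto; auto using smooth_Derive, smooth_flow_Derive.
    + intros j' Hj'. rewrite <- Derive_n_S.
      replace (C * M ^ j' * (M * ((M * X) ^ i * X))) with (C * M ^ S j' * ((M * X) ^ i * X))
        by (simpl; ring).
      apply HCb; [exact Hr|exact HM|intros; apply Hb; lia|lia].
    + intros j' Hj'. apply Hb. lia.
Qed.

(** * A flat function and smooth bumps *)

(* Polynomials as lists of coefficients, constant term first. *)
Fixpoint poly_eval (p : list R) (y : R) : R :=
  match p with nil => 0 | c :: p' => c + y * poly_eval p' y end.

Fixpoint poly_add (p q : list R) : list R :=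
  match p, q with
  | nil, _ => q
  | _, nil => p
  | a :: p', b :: q' => (a + b) :: poly_add p' q'
  end.

Fixpoint poly_deriv (p : list R) : list R :=
  match p with nil => nil | c :: p' => poly_add p' (0 :: poly_deriv p') end.

Definition poly_opp (p : list R) : list R := map Ropp p.

Fixpoint poly_norm (p : list R) : R :=
  match p with nil => 0 | c :: p' => Rabs c + poly_norm p' end.

Lemma poly_eval_add p q y : poly_eval (poly_add p q) y = poly_eval p y + poly_eval q y.
Proof.
  revert q; induction p as [|a p IH]; intros [|b q]; simpl; try ring.
  rewrite IH. ring.
Qed.

Lemma poly_eval_opp p y : poly_eval (poly_opp p) y = - poly_eval p y.
Proof. induction p as [|a p IH]; simpl; [ring|]. rewrite IH. ring. Qed.

Lemma is_derive_poly_eval p y : is_derive (poly_eval p) y (poly_eval (poly_deriv p) y).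
Proof.
  apply is_derive_Reals. induction p as [|c p IH]; simpl.
  - apply derivable_pt_lim_const.
  - rewrite poly_eval_add. simpl.
    replace (poly_eval p y + (0 + y * poly_eval (poly_deriv p) y))
      with (0 + (1 * poly_eval p y + y * poly_eval (poly_deriv p) y)) by ring.
    apply (derivable_pt_lim_plus (fun _ => c)); [apply derivable_pt_lim_const|].
    apply (derivable_pt_lim_mult (fun t => t)); [apply derivable_pt_lim_id|exact IH].
Qed.

Lemma poly_norm_ge0 p : 0 <= poly_norm p.
Proof. induction p as [|a p IH]; simpl; [lra|]. pose proof (Rabs_pos a). lra. Qed.

Lemma poly_eval_le p y : 1 <= y -> Rabs (poly_eval p y) <= poly_norm p * y ^ length p.
Proof.
  intros Hy. induction p as [|c p IH]; simpl; [rewrite Rabs_R0; lra|].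
  eapply Rle_trans; [apply Rabs_triang|]. rewrite Rabs_mult, (Rabs_right y) by lra.
  pose proof (pow_R1_Rle y (length p) Hy). pose proof (poly_norm_ge0 p).
  pose proof (Rabs_pos c). pose proof (Rabs_pos (poly_eval p y)).
  assert (Rabs (poly_eval p y) * y <= poly_norm p * y ^ length p * y)
    by (apply Rmult_le_compat_r; lra).
  assert (Rabs c <= Rabs c * (y * y ^ length p))
    by (rewrite <- (Rmult_1_r (Rabs c)) at 1; apply Rmult_le_compat_l; nra).
  nra.
Qed.

Lemma pow_mul_exp_opp_le m y : 0 < y ->
  y ^ m * exp (- y) <= INR (Factorial.fact (m + 2)) / y ^ 2.
Proof.
  intros Hy.
  assert (Htaylor : y ^ (m + 2) / INR (Factorial.fact (m + 2)) <= exp y).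
  { eapply Rle_trans; [|apply (exp_ge_taylor y (m + 2)); lra].
    replace (m + 2)%nat with (S (m + 1)) by lia. rewrite tech5.
    assert (0 <= sum_f_R0 (fun i => y ^ i / INR (Factorial.fact i)) (m + 1)); [|lra].
    apply cond_pos_sum. intros i.
    apply Rmult_le_pos; [apply pow_le; lra|left; apply Rinv_0_lt_compat, INR_fact_lt_0]. }
  pose proof (INR_fact_lt_0 (m + 2)). pose proof (exp_pos y).
  pose proof (pow_lt y m Hy). pose proof (pow_lt y 2 Hy).
  rewrite pow_add in Htaylor. rewrite exp_Ropp.
  apply (Rmult_le_reg_r (exp y * y ^ 2)); [nra|].
  apply (Rmult_le_reg_r (/ INR (Factorial.fact (m + 2)))); [now apply Rinv_0_lt_compat|].
  field_simplify; lra.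
Qed.

Lemma is_derive_0_of_sq_le F K : 0 <= K -> F 0 = 0 ->
  (forall h, Rabs h <= 1 -> Rabs (F h) <= K * (h * h)) -> is_derive F 0 0.
Proof.
  intros HK HF0 HF. apply is_derive_Reals. intros eps Heps.
  assert (Hd : 0 < Rmin 1 (eps / (K + 1))) by (apply Rmin_pos; [lra|apply Rdiv_lt_0_compat; lra]).
  exists (mkposreal _ Hd). simpl. intros h Hh Hlt.
  pose proof (Rmin_l 1 (eps / (K + 1))). pose proof (Rmin_r 1 (eps / (K + 1))).
  rewrite Rplus_0_l, HF0, Rminus_0_r, Rminus_0_r.
  assert (Hh0 : 0 < Rabs h) by now apply Rabs_pos_lt.
  unfold Rdiv. rewrite Rabs_mult, Rabs_inv.
  apply (Rmult_lt_reg_r (Rabs h)); [exact Hh0|].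
  rewrite Rmult_assoc, Rinv_l by lra.
  assert (Hsq : K * (h * h) = K * Rabs h * Rabs h)
    by (rewrite Rmult_assoc, <- Rabs_mult, Rabs_right; [ring|apply Rle_ge, Rle_0_sqr]).
  assert (K * Rabs h <= K * (eps / (K + 1))) by (apply Rmult_le_compat_l; lra).
  assert (K * (eps / (K + 1)) < eps) by (apply (Rmult_lt_reg_r (K + 1)); [lra|field_simplify; lra]).
  specialize (HF h ltac:(lra)). nra.
Qed.

Definition flat_exp (x : R) : R := if Rlt_dec 0 x then exp (- / x) else 0.

(* On [x > 0], the [n]-th derivative of [flat_exp] is [P_n (1/x) exp (-1/x)],
   with [P_0 = 1] and [P_(n+1) (y) = y^2 (P_n (y) - P_n' (y))]. *)
Fixpoint flat_exp_poly (n : nat) : list R :=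
  match n with
  | O => [1]
  | S n => 0 :: 0 :: poly_add (flat_exp_poly n) (poly_opp (poly_deriv (flat_exp_poly n)))
  end.

Definition flat_exp_Derive (n : nat) (x : R) : R :=
  poly_eval (flat_exp_poly n) (/ x) * exp (- / x).

Lemma flat_exp_pos x : 0 < x -> flat_exp x = exp (- / x).
Proof. intros H. unfold flat_exp. destruct (Rlt_dec 0 x); [reflexivity|lra]. Qed.

Lemma flat_exp_nonpos x : x <= 0 -> flat_exp x = 0.
Proof. intros H. unfold flat_exp. destruct (Rlt_dec 0 x); [lra|reflexivity]. Qed.

Lemma flat_exp_ge0 x : 0 <= flat_exp x.
Proof. unfold flat_exp. destruct (Rlt_dec 0 x); [left; apply exp_pos|lra]. Qed.

Lemma flat_exp_gt0 x : 0 < x -> 0 < flat_exp x.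
Proof. intros H. rewrite flat_exp_pos by exact H. apply exp_pos. Qed.

Lemma is_derive_flat_exp_Derive n x : 0 < x ->
  is_derive (flat_exp_Derive n) x (flat_exp_Derive (S n) x).
Proof.
  intros Hx. unfold flat_exp_Derive. apply is_derive_Reals.
  assert (Hinv : derivable_pt_lim (fun t => / t) x (- (1) / x ^ 2)).
  { apply is_derive_Reals. apply (is_derive_inv (fun t => t) x 1 (is_derive_id x)). simpl; lra. }
  assert (Hp : derivable_pt_lim (fun t => poly_eval (flat_exp_poly n) (/ t)) x
                (poly_eval (poly_deriv (flat_exp_poly n)) (/ x) * (- (1) / x ^ 2))).
  { apply (derivable_pt_lim_comp (fun t => / t)); auto.
    apply is_derive_Reals, is_derive_poly_eval. }
  assert (He : derivable_pt_lim (fun t => exp (- / t)) x (exp (- / x) * - (- (1) / x ^ 2))).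
  { apply (derivable_pt_lim_comp (fun t => - / t) exp).
    - now apply (derivable_pt_lim_opp (fun t => / t)).
    - apply is_derive_Reals, is_derive_exp. }
  simpl. rewrite poly_eval_add, poly_eval_opp.
  match goal with |- derivable_pt_lim _ _ ?v =>
    replace v with (poly_eval (poly_deriv (flat_exp_poly n)) (/ x) * (- (1) / x ^ 2) * exp (- / x)
      + poly_eval (flat_exp_poly n) (/ x) * (exp (- / x) * - (- (1) / x ^ 2))) by (field; lra) end.
  exact (derivable_pt_lim_mult _ _ _ _ _ Hp He).
Qed.

Lemma Derive_n_flat_exp_pos n x : 0 < x -> Derive_n flat_exp n x = flat_exp_Derive n x.
Proof.
  revert x; induction n as [|n IH]; intros x Hx.
  - simpl. rewrite flat_exp_pos by exact Hx. unfold flat_exp_Derive. simpl. ring.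
  - simpl. rewrite (Derive_ext_loc _ (flat_exp_Derive n)).
    + now apply is_derive_unique, is_derive_flat_exp_Derive.
    + apply (locally_interval _ x 0 p_infty); simpl; auto.
Qed.

Lemma Derive_n_flat_exp_neg n x : x < 0 -> Derive_n flat_exp n x = 0.
Proof.
  revert x; induction n as [|n IH]; intros x Hx.
  - simpl. apply flat_exp_nonpos. lra.
  - simpl. rewrite (Derive_ext_loc _ (fun _ => 0)); [apply Derive_const|].
    apply (locally_interval _ x m_infty 0); simpl; auto.
Qed.

Lemma flat_exp_Derive_le n : exists K, 0 <= K /\
  forall h, 0 < h <= 1 -> Rabs (flat_exp_Derive n h) <= K * (h * h).
Proof.
  set (p := flat_exp_poly n). set (m := length p).
  exists (poly_norm p * INR (Factorial.fact (m + 2))).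
  split; [apply Rmult_le_pos; [apply poly_norm_ge0|apply pos_INR]|].
  intros h Hh. unfold flat_exp_Derive. fold p.
  assert (Hy : 1 <= / h) by (rewrite <- Rinv_1; apply Rinv_le_contravar; lra).
  rewrite Rabs_mult, (Rabs_right (exp _)) by (left; apply exp_pos).
  pose proof (poly_eval_le p (/ h) Hy) as Hp. fold m in Hp.
  pose proof (pow_mul_exp_opp_le m (/ h) ltac:(lra)) as He.
  replace (INR (Factorial.fact (m + 2)) / (/ h) ^ 2) with (INR (Factorial.fact (m + 2)) * (h * h))
    in He by (field; lra).
  pose proof (poly_norm_ge0 p). pose proof (exp_pos (- / h)).
  eapply Rle_trans; [apply Rmult_le_compat_r; [lra|exact Hp]|].
  rewrite Rmult_assoc, (Rmult_assoc (poly_norm p)).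
  now apply Rmult_le_compat_l.
Qed.

Lemma is_derive_Derive_n_flat_exp_0 n : Derive_n flat_exp n 0 = 0 ->
  is_derive (Derive_n flat_exp n) 0 0.
Proof.
  intros H0. destruct (flat_exp_Derive_le n) as [K [HK HKb]].
  apply (is_derive_0_of_sq_le _ K); auto. intros h Hh.
  destruct (Rtotal_order h 0) as [Hn|[->|Hp]].
  - rewrite Derive_n_flat_exp_neg, Rabs_R0 by exact Hn.
    apply Rmult_le_pos; [exact HK|apply Rle_0_sqr].
  - rewrite H0, Rabs_R0. lra.
  - rewrite Derive_n_flat_exp_pos by exact Hp. apply HKb. apply Rabs_le_between in Hh. lra.
Qed.

Lemma Derive_n_flat_exp_0 n : Derive_n flat_exp n 0 = 0.
Proof.
  induction n as [|n IH]; [simpl; apply flat_exp_nonpos; lra|].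
  apply is_derive_unique, is_derive_Derive_n_flat_exp_0, IH.
Qed.

Lemma smooth_flat_exp : smooth flat_exp.
Proof.
  intros [|n] x; [exact I|].
  destruct (Rtotal_order x 0) as [Hx|[->|Hx]].
  - exists 0. apply (is_derive_ext_loc (fun _ => 0)).
    + apply (locally_interval _ x m_infty 0); simpl; auto.
      intros y _ Hy. symmetry. now apply Derive_n_flat_exp_neg.
    + apply is_derive_Reals, derivable_pt_lim_const.
  - exists 0. apply is_derive_Derive_n_flat_exp_0, Derive_n_flat_exp_0.
  - exists (flat_exp_Derive (S n) x). apply (is_derive_ext_loc (flat_exp_Derive n)).
    + apply (locally_interval _ x 0 p_infty); simpl; auto.
      intros y Hy _. symmetry. now apply Derive_n_flat_exp_pos.
    + now apply is_derive_flat_exp_Derive.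
Qed.

Lemma exists_bound_upto (P : nat -> R -> Prop) :
  (forall j M M', M <= M' -> P j M -> P j M') -> (forall j, exists M, P j M) ->
  forall n, exists M, 0 <= M /\ forall j, (j <= n)%nat -> P j M.
Proof.
  intros Hmono HP n. induction n as [|n [M [HM IH]]].
  - destruct (HP 0%nat) as [M HM]. exists (Rmax 0 M). split; [apply Rmax_l|].
    intros j Hj. replace j with 0%nat by lia. eapply Hmono; [apply Rmax_r|exact HM].
  - destruct (HP (S n)) as [M' HM']. exists (Rmax M M').
    split; [eapply Rle_trans; [exact HM|apply Rmax_l]|].
    intros j Hj. destruct (Nat.eq_dec j (S n)) as [->|Hne].
    + eapply Hmono; [apply Rmax_r|exact HM'].
    + eapply Hmono; [apply Rmax_l|apply IH; lia].
Qed.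

Lemma bounded_of_bounded_outside g a b M0 : a <= b -> (forall x, continuous g x) ->
  (forall x, x < a \/ b < x -> Rabs (g x) <= M0) -> exists M, forall x, Rabs (g x) <= M.
Proof.
  intros Hab Hg Hout.
  assert (Hc : forall c, a <= c <= b -> continuity_pt (fun x => Rabs (g x)) c).
  { intros c _. apply (continuity_pt_comp g Rabs).
    - apply continuity_pt_filterlim, Hg.
    - apply Rcontinuity_abs. }
  destruct (continuity_ab_maj _ a b Hab Hc) as [xm [Hm _]].
  exists (Rmax M0 (Rabs (g xm))). intros x.
  destruct (Rlt_dec x a) as [Hxa|Hxa]; [|destruct (Rlt_dec b x) as [Hbx|Hbx]].
  - eapply Rle_trans; [apply Hout; auto|apply Rmax_l].
  - eapply Rle_trans; [apply Hout; auto|apply Rmax_l].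
  - eapply Rle_trans; [apply Hm; lra|apply Rmax_r].
Qed.

Lemma Rabs_Derive_n_locally_const f c k x : locally x (fun t => f t = c) ->
  Rabs (Derive_n f k x) <= Rabs c.
Proof.
  intros Hc. destruct k as [|k].
  - simpl. rewrite (locally_singleton _ _ Hc). lra.
  - rewrite (Derive_n_ext_loc _ (fun _ => c) _ _ Hc), Derive_n_const, Rabs_R0. apply Rabs_pos.
Qed.

Definition smooth_step (x : R) : R := flat_exp x / (flat_exp x + flat_exp (1 - x)).

Lemma smooth_step_denom_pos x : 0 < flat_exp x + flat_exp (1 - x).
Proof.
  pose proof (flat_exp_ge0 x). pose proof (flat_exp_ge0 (1 - x)).
  destruct (Rlt_dec 0 x) as [Hx|Hx].
  - pose proof (flat_exp_gt0 x Hx). lra.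
  - pose proof (flat_exp_gt0 (1 - x) ltac:(lra)). lra.
Qed.

Lemma smooth_smooth_step : smooth smooth_step.
Proof.
  apply smooth_mult; [apply smooth_flat_exp|].
  apply smooth_inv; [intros x; pose proof (smooth_step_denom_pos x); lra|].
  apply smooth_plus; [apply smooth_flat_exp|].
  apply (smooth_ext (fun x => flat_exp (-1 * x + 1))); [intros x; f_equal; ring|].
  apply smooth_comp_affine, smooth_flat_exp.
Qed.

Lemma smooth_step_nonpos x : x <= 0 -> smooth_step x = 0.
Proof. intros H. unfold smooth_step. rewrite flat_exp_nonpos by exact H. unfold Rdiv. ring. Qed.

Lemma smooth_step_ge1 x : 1 <= x -> smooth_step x = 1.
Proof.
  intros H. unfold smooth_step. rewrite (flat_exp_nonpos (1 - x)) by lra.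
  pose proof (flat_exp_gt0 x ltac:(lra)). field. lra.
Qed.

Lemma smooth_step_range x : 0 <= smooth_step x <= 1.
Proof.
  unfold smooth_step. pose proof (smooth_step_denom_pos x).
  pose proof (flat_exp_ge0 x). pose proof (flat_exp_ge0 (1 - x)).
  split; [apply Rdiv_le_0_compat; lra|].
  apply (Rdiv_le_1 (flat_exp x)); lra.
Qed.

Lemma smooth_step_Derive_n_le n : exists M, 0 <= M /\
  forall j x, (j <= n)%nat -> Rabs (Derive_n smooth_step j x) <= M.
Proof.
  destruct (exists_bound_upto (fun j M => forall x, Rabs (Derive_n smooth_step j x) <= M))
    with (n := n) as [M [HM HMb]].
  - intros j M M' HMM' H x. eapply Rle_trans; [apply H|exact HMM'].
  - intros j. apply (bounded_of_bounded_outside _ 0 1 1); [lra| |].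
    + intros x. apply (ex_derive_continuous (Derive_n smooth_step j)), (smooth_smooth_step (S j)).
    + intros x [Hx|Hx].
      * eapply Rle_trans; [apply (Rabs_Derive_n_locally_const _ 0)|rewrite Rabs_R0; lra].
        apply (locally_interval _ x m_infty 0); simpl; auto.
        intros y _ Hy. apply smooth_step_nonpos. lra.
      * eapply Rle_trans; [apply (Rabs_Derive_n_locally_const _ 1)|rewrite Rabs_R1; lra].
        apply (locally_interval _ x 1 p_infty); simpl; auto.
        intros y Hy _. apply smooth_step_ge1. lra.
  - exists M. split; [exact HM|]. intros j x Hj. now apply HMb.
Qed.

Definition plateau (w c d y : R) : R := smooth_step ((y - c) / w) * smooth_step ((d - y) / w).

Section Plateau.

Variables (w c d : R).
Hypothesis Hw : 0 < w.

Lemma plateau_affine y :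
  plateau w c d y = smooth_step (/ w * y + - c / w) * smooth_step (- / w * y + d / w).
Proof. unfold plateau. f_equal; f_equal; field; lra. Qed.

Lemma smooth_plateau : smooth (plateau w c d).
Proof.
  apply (smooth_ext _ _ (fun y => eq_sym (plateau_affine y))).
  apply smooth_mult; apply smooth_comp_affine, smooth_smooth_step.
Qed.

Lemma plateau_le y : y <= c -> plateau w c d y = 0.
Proof.
  intros H. unfold plateau. rewrite smooth_step_nonpos; [ring|].
  apply Rle_div_l; lra.
Qed.

Lemma plateau_ge y : d <= y -> plateau w c d y = 0.
Proof.
  intros H. unfold plateau. rewrite (smooth_step_nonpos ((d - y) / w)); [ring|].
  apply Rle_div_l; lra.
Qed.

Lemma plateau_eq1 y : c + w <= y <= d - w -> plateau w c d y = 1.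
Proof.
  intros H. unfold plateau. rewrite !smooth_step_ge1; [ring| |]; apply Rle_div_r; lra.
Qed.

End Plateau.

Lemma plateau_range w c d y : 0 <= plateau w c d y <= 1.
Proof.
  unfold plateau.
  destruct (smooth_step_range ((y - c) / w)), (smooth_step_range ((d - y) / w)).
  split; [now apply Rmult_le_pos|nra].
Qed.

Lemma plateau_Derive_n_le n : exists C, 0 <= C /\ forall w c d y j, 0 < w -> (j <= n)%nat ->
  Rabs (Derive_n (plateau w c d) j y) <= C * (/ w) ^ j.
Proof.
  destruct (smooth_step_Derive_n_le n) as [M [HM HMb]].
  exists (2 ^ n * M * M). split; [apply Rmult_le_pos; [apply Rmult_le_pos; [apply pow_le|]|]; lra|].
  intros w c d y j Hw Hj.
  assert (Hstep : forall a b i, Rabs a = / w -> (i <= n)%nat ->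
    Rabs (Derive_n (fun y => smooth_step (a * y + b)) i y) <= M * (/ w) ^ i * 1).
  { intros a b i Ha Hi.
    rewrite Derive_n_comp_affine, Rabs_mult, <- RPow_abs, Ha by apply smooth_smooth_step.
    pose proof (HMb i (a * y + b) Hi).
    pose proof (pow_le (/ w) i ltac:(rewrite <- Ha; apply Rabs_pos)). nra. }
  assert (Hinv : Rabs (/ w) = / w) by (apply Rabs_right; left; now apply Rinv_0_lt_compat).
  rewrite (Derive_n_ext _ _ _ _ (plateau_affine w c d Hw)).
  replace (2 ^ n * M * M * (/ w) ^ j) with (2 ^ n * M * M * (/ w) ^ j * 1 * 1) by ring.
  apply (Derive_n_mult_le_upto n); try apply smooth_comp_affine, smooth_smooth_step; try exact Hj.
  - left. now apply Rinv_0_lt_compat.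
  - intros i Hi. apply Hstep; [exact Hinv|exact Hi].
  - intros i Hi. apply Hstep; [rewrite Rabs_Ropp; exact Hinv|exact Hi].
Qed.

(** * Periodization and inverse functions *)

Lemma Zfloor_div_bound s a t : 0 < s ->
  s * IZR (Zfloor ((t - a) / s)) <= t - a < s * IZR (Zfloor ((t - a) / s)) + s.
Proof.
  intros Hs. destruct (Zfloor_bound ((t - a) / s)) as [H1 H2].
  apply Rle_div_r in H1; [|lra]. apply Rlt_div_l in H2; [|lra]. lra.
Qed.

Lemma periodic_Z f s : periodic f s -> forall k x, f (x + s * IZR k) = f x.
Proof.
  intros Hf.
  assert (Hnat : forall n x, f (x + s * INR n) = f x).
  { induction n as [|n IH]; intros x; [simpl; f_equal; ring|].
    rewrite S_INR. replace (x + s * (INR n + 1)) with (x + s * INR n + s) by ring.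
    rewrite Hf. apply IH. }
  intros k x. destruct (Z_le_gt_dec 0 k).
  - rewrite <- (Z2Nat.id k), <- INR_IZR_INZ by lia. apply Hnat.
  - replace k with (- Z.of_nat (Z.to_nat (- k)))%Z by lia.
    rewrite opp_IZR, <- INR_IZR_INZ, <- (Hnat (Z.to_nat (- k))). f_equal. ring.
Qed.

Definition periodize (s a : R) (B : R -> R) (x : R) : R :=
  B (x - s * IZR (Zfloor ((x - a) / s))).

Lemma periodize_periodic s a B : 0 < s -> periodic (periodize s a B) s.
Proof.
  intros Hs x. unfold periodize.
  replace ((x + s - a) / s) with ((x - a) / s + IZR 1) by (simpl; field; lra).
  rewrite Zfloor_addz, plus_IZR. f_equal. simpl. ring.
Qed.

Section Periodize.

Variables (s a c d : R) (B : R -> R).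
Hypotheses (Hs : 0 < s) (Hac : a < c) (Hcd : c <= d) (Hda : d < a + s)
  (HBc : forall z, z <= c -> B z = 0) (HBd : forall z, d <= z -> B z = 0).

(* Near [x] the floor index is [k] or [k - 1]; where it is [k - 1], [B] vanishes at both shifts. *)
Lemma periodize_shift_locally x :
  locally x (fun t => periodize s a B t = B (t - s * IZR (Zfloor ((x - a) / s)))).
Proof.
  set (k := Zfloor ((x - a) / s)).
  pose proof (Zfloor_div_bound s a x Hs) as Hx. fold k in Hx.
  apply (locally_interval _ x (d + s * (IZR k - 1)) (a + s * (IZR k + 1))); simpl; [lra|lra|].
  intros t Ht1 Ht2. unfold periodize.
  set (k' := Zfloor ((t - a) / s)).
  pose proof (Zfloor_div_bound s a t Hs) as Ht. fold k' in Ht.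
  assert (Hk' : (k' <= k)%Z).
  { apply Zlt_succ_le, lt_IZR. rewrite succ_IZR. apply (Rmult_lt_reg_l s); lra. }
  assert (Hk : (k - 1 <= k')%Z).
  { apply Zlt_succ_le, lt_IZR. rewrite succ_IZR, minus_IZR. apply (Rmult_lt_reg_l s); lra. }
  destruct (Z.eq_dec k' k) as [->|Hne]; [reflexivity|].
  replace k' with (k - 1)%Z in * by lia. rewrite minus_IZR in *.
  rewrite HBd, HBc; [reflexivity|lra|lra].
Qed.

Lemma smooth_periodize : smooth B -> smooth (periodize s a B).
Proof.
  intros HB n x.
  apply (ex_derive_n_ext_loc (fun t => B (t + - (s * IZR (Zfloor ((x - a) / s)))))).
  - eapply filter_imp; [|apply (periodize_shift_locally x)].
    intros t Ht. now rewrite Ht.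
  - apply ex_derive_n_comp_trans, HB.
Qed.

Lemma Derive_n_periodize x : exists z, forall n,
  Derive_n (periodize s a B) n x = Derive_n B n z.
Proof.
  exists (x + - (s * IZR (Zfloor ((x - a) / s)))). intros n.
  rewrite <- Derive_n_comp_trans. apply Derive_n_ext_loc.
  eapply filter_imp; [|apply (periodize_shift_locally x)].
  intros t Ht. now rewrite Ht.
Qed.

Lemma periodize_eq x : a < 0 <= c -> 0 <= x <= s -> periodize s a B x = B x.
Proof.
  intros Ha Hx. unfold periodize.
  destruct (Rlt_dec x (a + s)) as [Hxa|Hxa].
  - rewrite (Zfloor_eq 0); [simpl; f_equal; ring|].
    simpl. split; [apply Rle_div_r|apply Rlt_div_l]; lra.
  - rewrite (Zfloor_eq 1); [simpl; rewrite HBc, HBd; lra|].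
    simpl. split; [apply Rle_div_r|apply Rlt_div_l]; lra.
Qed.

End Periodize.

Section Inverse.

Variables (f f' : R -> R) (m : R).
Hypotheses (Hm : 0 < m) (Hf : forall x, is_derive f x (f' x))
  (Hincr : forall x y, x <= y -> m * (y - x) <= f y - f x).

Lemma increasing_inj x y : f x = f y -> x = y.
Proof.
  intros E. destruct (Rtotal_order x y) as [Hl|[Hl|Hl]]; auto.
  - specialize (Hincr x y ltac:(lra)). nra.
  - specialize (Hincr y x ltac:(lra)). nra.
Qed.

Lemma exists_inverse c : 0 <= c -> (forall y, f (y - c) <= y <= f y) ->
  {h : R -> R | (forall y, f (h y) = y) /\ (forall x, h (f x) = x)}.
Proof.
  intros Hc Hbrack.
  assert (Hcont : forall y, continuity (fun x => f x - y)).
  { intros y. apply continuity_minus; [|apply continuity_const; intros ? ?; reflexivity].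
    intros x. apply continuity_pt_filterlim, (ex_derive_continuous f x). eexists. apply Hf. }
  assert (Hsign : forall y, (f (y - c) - y) * (f y - y) <= 0).
  { intros y. destruct (Hbrack y). assert (f (y - c) - y <= 0) by lra. nra. }
  assert (Hle : forall y, y - c <= y) by (intros; lra).
  exists (fun y => proj1_sig (IVT_cor _ _ _ (Hcont y) (Hle y) (Hsign y))).
  assert (Hfh : forall y, f (proj1_sig (IVT_cor _ _ _ (Hcont y) (Hle y) (Hsign y))) = y).
  { assert (Hroot : forall y (z : {x | y - c <= x <= y /\ f x - y = 0}), f (proj1_sig z) = y)
      by (intros y [x [Hxy Hx]]; simpl; lra).
    intros y. apply Hroot. }
  split; [exact Hfh|]. intros x. apply increasing_inj, Hfh.
Qed.

Variable h : R -> R.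
Hypothesis Hfh : forall y, f (h y) = y.

Lemma inverse_le y1 y2 : y1 <= y2 -> h y1 <= h y2.
Proof.
  intros Hy. destruct (Rle_dec (h y1) (h y2)) as [Hle|Hgt]; [exact Hle|].
  specialize (Hincr (h y2) (h y1) ltac:(lra)). rewrite !Hfh in Hincr. nra.
Qed.

Lemma inverse_lipschitz y1 y2 : Rabs (h y1 - h y2) <= Rabs (y1 - y2) / m.
Proof.
  assert (Hsym : forall y1 y2, y1 <= y2 -> Rabs (h y1 - h y2) <= Rabs (y1 - y2) / m).
  { clear y1 y2. intros y1 y2 Hy. pose proof (inverse_le y1 y2 Hy) as Hh.
    specialize (Hincr (h y1) (h y2) Hh). rewrite !Hfh in Hincr.
    rewrite !Rabs_left1 by lra. apply Rle_div_r; lra. }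
  destruct (Rle_dec y1 y2) as [Hy|Hy]; [now apply Hsym|].
  rewrite Rabs_minus_sym, (Rabs_minus_sym y1). apply Hsym. lra.
Qed.

Lemma inverse_continuity_pt y : continuity_pt h y.
Proof.
  intros eps Heps. exists (eps * m). split; [nra|].
  intros x [_ Hx]. simpl in *. unfold R_dist in *.
  eapply Rle_lt_trans; [apply inverse_lipschitz|]. apply Rlt_div_l; lra.
Qed.

Lemma is_derive_inverse y : f' (h y) <> 0 -> is_derive h y (/ f' (h y)).
Proof.
  intros Hnz.
  assert (Prf : forall a, h (y - 1) <= a <= h (y + 1) -> derivable_pt f a)
    by (intros a _; exists (f' a); apply is_derive_Reals, Hf).
  assert (Hmono : h (y - 1) <= h y <= h (y + 1)) by (split; apply inverse_le; lra).
  assert (Hderive : forall H, derive_pt f (h y) H = f' (h y))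
    by (intros H; apply derive_pt_eq_0, is_derive_Reals, Hf).
  apply is_derive_Reals.
  replace (/ f' (h y)) with (1 / derive_pt f (h y) (Prf (h y) Hmono))
    by (rewrite Hderive; field; exact Hnz).
  apply derivable_pt_lim_recip_interv; [apply inverse_continuity_pt|lra|lra| |].
  - intros x _. apply Hfh.
  - now rewrite Hderive.
Qed.

End Inverse.

(** * The construction *)

Lemma ex_RInt_smooth f a b : smooth f -> ex_RInt f a b.
Proof.
  intros Hf. apply (@ex_RInt_continuous R_CompleteNormedModule).
  intros; now apply smooth_continuous.
Qed.

Lemma RInt_eq0 f a b : a <= b -> (forall x, a <= x <= b -> f x = 0) -> RInt f a b = 0.
Proof.
  intros Hab Hf. rewrite (RInt_ext f (fun _ => 0)), RInt_const.
  - unfold scal; simpl; unfold mult; simpl. ring.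
  - intros x Hx. rewrite Rmin_left, Rmax_right in Hx by lra. apply Hf. lra.
Qed.

Lemma RInt_ge_of_eq1 f a b c e : smooth f -> (forall x, 0 <= f x) ->
  a <= c -> c <= e -> e <= b -> (forall x, c <= x <= e -> f x = 1) -> e - c <= RInt f a b.
Proof.
  intros Hf Hpos Hac Hce Heb Hf1.
  rewrite <- (RInt_Chasles f a c b), <- (RInt_Chasles f c e b) by now apply ex_RInt_smooth.
  rewrite (RInt_ext f (fun _ => 1) c e), RInt_const.
  2: { intros x Hx. rewrite Rmin_left, Rmax_right in Hx by lra. apply Hf1. lra. }
  assert (0 <= RInt f a c) by (apply RInt_ge_0; auto; now apply ex_RInt_smooth).
  assert (0 <= RInt f e b) by (apply RInt_ge_0; auto; now apply ex_RInt_smooth).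
  unfold plus, scal; simpl; unfold mult; simpl. lra.
Qed.

Section Construction.

Variables s d : R.
Hypotheses (Hd : 0 < d) (Hds : d < s / 2).

(* Both bump supports, [[0, d]] and [[d + d/8, s - d/8]], lie in the period window
   [[-d/16, s - d/16)]. *)
Definition left_bump : R -> R := periodize s (- d / 16) (plateau (d / 8) 0 d).
Definition right_bump : R -> R :=
  periodize s (- d / 16) (plateau (d / 8) (d + d / 8) (s - d / 8)).
Definition left_coef : R := (s - 2 * d) / RInt left_bump 0 d.
Definition right_coef : R := (s - 2 * d) / RInt right_bump d s.
Definition a_rate (x : R) : R := left_coef * left_bump x - right_coef * right_bump x.
Definition a_map (x : R) : R := RInt a_rate 0 x.
Definition A_map (x : R) : R := x + a_map x.
Definition A_rate (x : R) : R := 1 + a_rate x.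

Ltac bound := unfold Rdiv in *; lra.

Lemma left_plateau_zero z : z <= 0 \/ d <= z -> plateau (d / 8) 0 d z = 0.
Proof. intros [Hz|Hz]; [apply plateau_le|apply plateau_ge]; bound. Qed.

Lemma right_plateau_zero z : z <= d + d / 8 \/ s - d / 8 <= z ->
  plateau (d / 8) (d + d / 8) (s - d / 8) z = 0.
Proof. intros [Hz|Hz]; [apply plateau_le|apply plateau_ge]; bound. Qed.

Lemma smooth_left_bump : smooth left_bump.
Proof.
  apply (smooth_periodize _ _ 0 d); try bound;
    [intros; apply left_plateau_zero; lra..|apply smooth_plateau; bound].
Qed.

Lemma smooth_right_bump : smooth right_bump.
Proof.
  apply (smooth_periodize _ _ (d + d / 8) (s - d / 8)); try bound;
    [intros; apply right_plateau_zero; lra..|apply smooth_plateau; bound].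
Qed.

Lemma left_bump_range x : 0 <= left_bump x <= 1.
Proof. apply plateau_range. Qed.

Lemma right_bump_range x : 0 <= right_bump x <= 1.
Proof. apply plateau_range. Qed.

Lemma left_bump_eq x : 0 <= x <= s -> left_bump x = plateau (d / 8) 0 d x.
Proof.
  intros Hx. apply (periodize_eq _ _ 0 d); try bound; intros; apply left_plateau_zero; lra.
Qed.

Lemma right_bump_eq x : 0 <= x <= s ->
  right_bump x = plateau (d / 8) (d + d / 8) (s - d / 8) x.
Proof.
  intros Hx. apply (periodize_eq _ _ (d + d / 8) (s - d / 8)); try bound;
    intros; apply right_plateau_zero; lra.
Qed.

Lemma left_bump_zero x : d <= x <= s -> left_bump x = 0.
Proof. intros Hx. rewrite left_bump_eq by bound. apply left_plateau_zero. lra. Qed.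

Lemma right_bump_zero x : 0 <= x <= d + d / 8 -> right_bump x = 0.
Proof. intros Hx. rewrite right_bump_eq by bound. apply right_plateau_zero. lra. Qed.

Lemma RInt_left_bump_ge : d / 2 <= RInt left_bump 0 d.
Proof.
  replace (d / 2) with (d - d / 4 - d / 4) by field.
  apply RInt_ge_of_eq1; try bound; auto using smooth_left_bump.
  - intros; apply left_bump_range.
  - intros x Hx. rewrite left_bump_eq by bound. apply plateau_eq1; bound.
Qed.

Lemma RInt_right_bump_ge : s - 3 * d / 2 <= RInt right_bump d s.
Proof.
  replace (s - 3 * d / 2) with (s - d / 4 - (d + d / 4)) by field.
  apply RInt_ge_of_eq1; try bound; auto using smooth_right_bump.
  - intros; apply right_bump_range.
  - intros x Hx. rewrite right_bump_eq by bound. apply plateau_eq1; bound.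
Qed.

Lemma left_coef_bounds : 0 <= left_coef <= 2 * s / d - 1.
Proof.
  pose proof RInt_left_bump_ge. unfold left_coef. split.
  - apply Rdiv_le_0_compat; bound.
  - apply Rle_div_l; [bound|].
    replace (2 * s / d - 1) with ((2 * s - d) / d) by (field; lra).
    assert ((2 * s - d) / d * (d / 2) <= (2 * s - d) / d * RInt left_bump 0 d)
      by (apply Rmult_le_compat_l; [apply Rdiv_le_0_compat|]; bound).
    replace ((2 * s - d) / d * (d / 2)) with (s - d / 2) in * by (field; lra). lra.
Qed.

Lemma right_coef_bounds : 0 <= right_coef <= 1 - d / (2 * s).
Proof.
  pose proof RInt_right_bump_ge. unfold right_coef. split.
  - apply Rdiv_le_0_compat; bound.
  - apply Rle_div_l; [bound|].
    assert (Hq : d / (2 * s) <= 1) by (apply Rle_div_l; lra).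
    apply Rminus_le_0 in Hq.
    assert ((1 - d / (2 * s)) * (s - 3 * d / 2) <= (1 - d / (2 * s)) * RInt right_bump d s)
      by (apply Rmult_le_compat_l; assumption).
    replace ((1 - d / (2 * s)) * (s - 3 * d / 2)) with (s - 2 * d + 3 * d * d / (4 * s)) in *
      by (field; lra).
    assert (0 <= 3 * d * d / (4 * s)) by (apply Rdiv_le_0_compat; nra).
    lra.
Qed.

Lemma A_rate_bounds x : d / (2 * s) <= A_rate x <= 2 * s / d.
Proof.
  unfold A_rate, a_rate. pose proof left_coef_bounds. pose proof right_coef_bounds.
  destruct (left_bump_range x), (right_bump_range x).
  assert (d / (2 * s) <= 1) by (apply Rle_div_l; lra).
  split; nra.
Qed.

Lemma A_rate_pos x : 0 < A_rate x.
Proof.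
  pose proof (A_rate_bounds x). assert (0 < d / (2 * s)) by (apply Rdiv_lt_0_compat; lra). lra.
Qed.

Lemma smooth_a_rate : smooth a_rate.
Proof. apply smooth_minus; apply smooth_scal; auto using smooth_left_bump, smooth_right_bump. Qed.

Lemma smooth_A_rate : smooth A_rate.
Proof. apply smooth_plus; [apply smooth_const|apply smooth_a_rate]. Qed.

Lemma is_derive_a_map x : is_derive a_map x (a_rate x).
Proof.
  apply (is_derive_RInt a_rate _ 0).
  - apply filter_forall. intros b. apply (RInt_correct (V := R_CompleteNormedModule)).
    apply ex_RInt_smooth, smooth_a_rate.
  - apply smooth_continuous, smooth_a_rate.
Qed.

Lemma is_derive_A_map x : is_derive A_map x (A_rate x).
Proof.
  apply is_derive_Reals, (derivable_pt_lim_plus (fun t => t) a_map);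
    [apply derivable_pt_lim_id|apply is_derive_Reals, is_derive_a_map].
Qed.

Lemma smooth_a_map : smooth a_map.
Proof.
  apply smooth_of_Derive; [intros; eexists; apply is_derive_a_map|].
  apply (smooth_ext a_rate); [|apply smooth_a_rate].
  intros x. symmetry. apply is_derive_unique, is_derive_a_map.
Qed.

Lemma smooth_A_map : smooth A_map.
Proof. apply smooth_plus; [apply smooth_id|apply smooth_a_map]. Qed.

Lemma a_map_sub x y : a_map y - a_map x = RInt a_rate x y.
Proof.
  unfold a_map. rewrite <- (RInt_Chasles a_rate 0 x y) by apply ex_RInt_smooth, smooth_a_rate.
  unfold plus; simpl. ring.
Qed.

Lemma RInt_a_rate x y :
  RInt a_rate x y = left_coef * RInt left_bump x y - right_coef * RInt right_bump x y.
Proof.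
  unfold a_rate.
  rewrite (RInt_minus (V := R_CompleteNormedModule)), !(RInt_scal (V := R_CompleteNormedModule));
    auto using ex_RInt_smooth, smooth_left_bump, smooth_right_bump, smooth_scal.
Qed.

Lemma a_map_d : a_map d = s - 2 * d.
Proof.
  pose proof RInt_left_bump_ge.
  unfold a_map. rewrite RInt_a_rate, (RInt_eq0 right_bump); [|lra|].
  - unfold left_coef. field. lra.
  - intros x Hx. apply right_bump_zero. bound.
Qed.

Lemma a_map_s : a_map s = 0.
Proof.
  pose proof RInt_left_bump_ge. pose proof RInt_right_bump_ge.
  unfold a_map. rewrite RInt_a_rate.
  rewrite <- (RInt_Chasles left_bump 0 d s), <- (RInt_Chasles right_bump 0 d s)
    by auto using ex_RInt_smooth, smooth_left_bump, smooth_right_bump.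
  rewrite (RInt_eq0 left_bump d s), (RInt_eq0 right_bump 0 d); try bound.
  - unfold plus; simpl. unfold left_coef, right_coef. field. split; bound.
  - intros x Hx. apply right_bump_zero. bound.
  - intros x Hx. apply left_bump_zero. bound.
Qed.

Lemma a_rate_periodic : periodic a_rate s.
Proof.
  intros t. unfold a_rate, left_bump, right_bump. rewrite !periodize_periodic by lra. reflexivity.
Qed.

Lemma a_map_periodic : periodic a_map s.
Proof.
  intros x. unfold a_map.
  rewrite <- (RInt_Chasles a_rate 0 s (x + s)) by apply ex_RInt_smooth, smooth_a_rate.
  fold (a_map s). rewrite a_map_s.
  pose proof (RInt_comp_lin (V := R_CompleteNormedModule) a_rate 1 s 0 x) as Hshift.
  rewrite !Rmult_1_l, Rplus_0_l in Hshift.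
  rewrite <- Hshift by apply ex_RInt_smooth, smooth_a_rate.
  unfold plus; simpl. rewrite Rplus_0_l. apply RInt_ext. intros t _.
  unfold scal; simpl; unfold mult; simpl. rewrite !Rmult_1_l. apply a_rate_periodic.
Qed.

Lemma a_rate_nonneg x : 0 <= x <= d -> 0 <= a_rate x.
Proof.
  intros Hx. unfold a_rate. rewrite right_bump_zero by bound.
  pose proof left_coef_bounds. pose proof (left_bump_range x). nra.
Qed.

Lemma a_rate_nonpos x : d <= x <= s -> a_rate x <= 0.
Proof.
  intros Hx. unfold a_rate. rewrite left_bump_zero by bound.
  pose proof right_coef_bounds. pose proof (right_bump_range x). nra.
Qed.

Lemma a_map_0 : a_map 0 = 0.
Proof. unfold a_map. rewrite RInt_point. reflexivity. Qed.

Lemma a_map_range_period x : 0 <= x <= s -> 0 <= a_map x <= s - 2 * d.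
Proof.
  intros Hx.
  assert (Hpos : forall y z, 0 <= y <= z -> z <= d -> 0 <= RInt a_rate y z).
  { intros y z Hyz Hz. apply RInt_ge_0; [lra|apply ex_RInt_smooth, smooth_a_rate|].
    intros t Ht. apply a_rate_nonneg. lra. }
  assert (Hneg : forall y z, d <= y <= z -> z <= s -> RInt a_rate y z <= 0).
  { intros y z Hyz Hz.
    assert (Hopp : 0 <= RInt (fun t => - a_rate t) y z).
    { apply RInt_ge_0; [lra|apply ex_RInt_smooth, smooth_opp, smooth_a_rate|].
      intros t Ht. pose proof (a_rate_nonpos t ltac:(lra)). lra. }
    rewrite (RInt_opp (V := R_CompleteNormedModule)) in Hopp
      by apply ex_RInt_smooth, smooth_a_rate.
    unfold opp in Hopp; simpl in Hopp. lra. }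
  pose proof (a_map_sub 0 x) as H0x. pose proof (a_map_sub x d) as Hxd.
  pose proof (a_map_sub d x) as Hdx. pose proof (a_map_sub x s) as Hxs.
  rewrite a_map_0, a_map_d in *. rewrite a_map_s in Hxs.
  destruct (Rle_dec x d) as [Hle|Hgt].
  - pose proof (Hpos 0 x ltac:(lra) Hle). pose proof (Hpos x d ltac:(lra) ltac:(lra)). lra.
  - pose proof (Hneg x s ltac:(lra) ltac:(lra)). pose proof (Hneg d x ltac:(lra) ltac:(lra)). lra.
Qed.

Lemma a_map_range x : 0 <= a_map x <= s - 2 * d.
Proof.
  assert (Hs : 0 < s) by lra.
  set (k := Zfloor (x / s)).
  pose proof (Zfloor_div_bound s 0 x Hs) as Hk. rewrite Rminus_0_r in Hk. fold k in Hk.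
  replace x with (x - s * IZR k + s * IZR k) by ring.
  rewrite (periodic_Z _ _ a_map_periodic). apply a_map_range_period. lra.
Qed.

Lemma A_map_incr x y : x <= y -> d / (2 * s) * (y - x) <= A_map y - A_map x.
Proof.
  intros Hxy. unfold A_map.
  replace (y + a_map y - (x + a_map x)) with (y - x + (a_map y - a_map x)) by ring.
  rewrite a_map_sub.
  assert (Hle : RInt (fun _ => d / (2 * s) - 1) x y <= RInt a_rate x y).
  { apply RInt_le; auto using ex_RInt_smooth, smooth_const, smooth_a_rate.
    intros t _. pose proof (A_rate_bounds t). unfold A_rate in *. lra. }
  rewrite RInt_const in Hle. unfold scal in Hle; simpl in Hle; unfold mult in Hle; simpl in Hle.
  nra.
Qed.

Lemma Derive_n_A_rate j x : (1 <= j)%nat ->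
  Derive_n A_rate j x = left_coef * Derive_n left_bump j x - right_coef * Derive_n right_bump j x.
Proof.
  intros Hj. unfold A_rate, a_rate.
  rewrite Derive_n_plus by (apply smooth_locally; auto using smooth_const, smooth_a_rate).
  destruct j as [|j]; [lia|]. rewrite Derive_n_const, Rplus_0_l.
  rewrite Derive_n_minus, !Derive_n_scal_l by
    (apply smooth_locally, smooth_scal; auto using smooth_left_bump, smooth_right_bump).
  reflexivity.
Qed.

Lemma left_bump_shift_locally x : locally x (fun t =>
  left_bump t = plateau (d / 8) 0 d (t - s * IZR (Zfloor ((x - - d / 16) / s)))).
Proof.
  apply (periodize_shift_locally _ _ 0 d); try bound; intros; apply left_plateau_zero; lra.
Qed.

Lemma right_bump_shift_locally x : locally x (fun t =>
  right_bump t =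
  plateau (d / 8) (d + d / 8) (s - d / 8) (t - s * IZR (Zfloor ((x - - d / 16) / s)))).
Proof.
  apply (periodize_shift_locally _ _ (d + d / 8) (s - d / 8)); try bound;
    intros; apply right_plateau_zero; lra.
Qed.

Lemma Derive_n_locally_zero f x : locally x (fun t => f t = 0) -> forall j, Derive_n f j x = 0.
Proof.
  intros Hf j. rewrite (Derive_n_ext_loc f (fun _ => 0)) by exact Hf.
  destruct j; [reflexivity|apply Derive_n_const].
Qed.

(* The supports of the two bumps are at distance [d/8] apart. *)
Lemma bumps_separated x :
  (forall j, Derive_n right_bump j x = 0) \/ (forall j, Derive_n left_bump j x = 0).
Proof.
  pose proof (left_bump_shift_locally x) as Hl. pose proof (right_bump_shift_locally x) as Hr.
  set (z := s * IZR (Zfloor ((x - - d / 16) / s))) in Hl, Hr.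
  destruct (Rle_dec (x - z) (d + d / 16)) as [Hle|Hgt]; [left|right];
    apply Derive_n_locally_zero.
  - assert (Hnear : locally x (fun t => t - z <= d + d / 8))
      by (apply (locally_interval _ x m_infty (z + (d + d / 8))); simpl; auto; intros; lra).
    generalize (filter_and _ _ Hr Hnear). apply filter_imp. intros t [-> Ht].
    apply right_plateau_zero. lra.
  - assert (Hnear : locally x (fun t => d <= t - z))
      by (apply (locally_interval _ x (z + d) p_infty); simpl; auto; intros; lra).
    generalize (filter_and _ _ Hl Hnear). apply filter_imp. intros t [-> Ht].
    apply left_plateau_zero. lra.
Qed.

Lemma Derive_n_left_bump x :
  exists z, forall j, Derive_n left_bump j x = Derive_n (plateau (d / 8) 0 d) j z.
Proof. apply (Derive_n_periodize _ _ 0 d); try bound; intros; apply left_plateau_zero; lra. Qed.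

Lemma Derive_n_right_bump x : exists z, forall j,
  Derive_n right_bump j x = Derive_n (plateau (d / 8) (d + d / 8) (s - d / 8)) j z.
Proof.
  apply (Derive_n_periodize _ _ (d + d / 8) (s - d / 8)); try bound;
    intros; apply right_plateau_zero; lra.
Qed.

Lemma Derive_A_rate_inv t :
  Derive (fun x => / A_rate x) t = - (Derive A_rate t * (/ A_rate t * / A_rate t)).
Proof.
  pose proof (A_rate_pos t).
  rewrite Derive_inv; [field; lra| |lra]. apply smooth_ex_derive, smooth_A_rate.
Qed.

Lemma A_rate_inv_le1 x : (forall j, Derive_n right_bump j x = 0) -> / A_rate x <= 1.
Proof.
  intros Hq. specialize (Hq 0%nat). simpl in Hq.
  assert (1 <= A_rate x).
  { unfold A_rate, a_rate. rewrite Hq. pose proof left_coef_bounds.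
    pose proof (left_bump_range x). nra. }
  rewrite <- Rinv_1. apply Rinv_le_contravar; lra.
Qed.

Hypothesis Hs1 : s <= 1.

Lemma inv_d_ge2 : 2 <= / d.
Proof. apply (Rmult_le_reg_r d); [exact Hd|]. rewrite Rinv_l; lra. Qed.

Lemma left_coef_le : left_coef <= 2 / d.
Proof.
  pose proof left_coef_bounds. assert (2 * s / d <= 2 / d); [|lra].
  apply Rmult_le_compat_r; [pose proof (Rinv_0_lt_compat d Hd); lra|lra].
Qed.

Lemma A_rate_le x : A_rate x <= 2 / d.
Proof.
  pose proof (A_rate_bounds x). assert (2 * s / d <= 2 / d); [|lra].
  apply Rmult_le_compat_r; [pose proof (Rinv_0_lt_compat d Hd); lra|lra].
Qed.

Lemma A_rate_inv_le x : / A_rate x <= 2 / d.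
Proof.
  pose proof (A_rate_bounds x). pose proof (Rinv_0_lt_compat d Hd).
  assert (0 < d / (2 * s)) by (apply Rdiv_lt_0_compat; lra).
  apply (Rle_trans _ (/ (d / (2 * s)))); [apply Rinv_le_contravar; lra|].
  replace (/ (d / (2 * s))) with (2 * s / d) by (field; lra).
  apply Rmult_le_compat_r; lra.
Qed.

End Construction.

(** * Estimates uniform in [s] and [delta] *)

Lemma bump_Derive_n_le n : exists C, 0 <= C /\ forall s d x j, 0 < d -> d < s / 2 ->
  (j <= n)%nat ->
  Rabs (Derive_n (left_bump s d) j x) <= C * 8 ^ j * (/ d) ^ j /\
  Rabs (Derive_n (right_bump s d) j x) <= C * 8 ^ j * (/ d) ^ j.
Proof.
  destruct (plateau_Derive_n_le n) as [C [HC HCb]]. exists C. split; [exact HC|].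
  intros s d x j Hd Hds Hj.
  replace (C * 8 ^ j * (/ d) ^ j) with (C * (/ (d / 8)) ^ j)
    by (rewrite Rmult_assoc, <- Rpow_mult_distr; do 2 f_equal; field; lra).
  destruct (Derive_n_left_bump s d Hd Hds x) as [zl ->].
  destruct (Derive_n_right_bump s d Hd Hds x) as [zr ->].
  split; apply HCb; lra || exact Hj.
Qed.

Lemma A_rate_Derive_n_le m : exists C, 0 <= C /\ forall s d x, 0 < d -> d < s / 2 -> s <= 1 ->
  Rabs (Derive_n (A_rate s d) m x) <= C * (/ d) ^ S m.
Proof.
  destruct (bump_Derive_n_le m) as [Cp [HCp HCpb]].
  exists (2 + 3 * Cp * 8 ^ m). split; [pose proof (pow_le 8 m); nra|].
  intros s d x Hd Hds Hs1.
  pose proof (inv_d_ge2 s d Hd Hds Hs1).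
  pose proof (pow_le (/ d) m ltac:(lra)). pose proof (pow_le 8 m ltac:(lra)).
  destruct m as [|m].
  - pose proof (A_rate_bounds s d Hd Hds x). pose proof (A_rate_le s d Hd Hds Hs1 x).
    simpl. rewrite Rabs_right by (assert (0 < d / (2 * s)) by (apply Rdiv_lt_0_compat; lra); lra).
    unfold Rdiv in *. nra.
  - rewrite Derive_n_A_rate by (auto; lia).
    destruct (HCpb s d x (S m) Hd Hds (le_n _)) as [Hp Hq].
    pose proof (left_coef_bounds s d Hd Hds). pose proof (left_coef_le s d Hd Hds Hs1).
    pose proof (right_coef_bounds s d Hd Hds).
    assert (0 < d / (2 * s)) by (apply Rdiv_lt_0_compat; lra).
    unfold Rdiv in *.
    eapply Rle_trans; [apply Rabs_triang|].
    rewrite Rabs_Ropp, !Rabs_mult, (Rabs_right (left_coef s d)), (Rabs_right (right_coef s d))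
      by lra.
    set (B := Cp * 8 ^ S m * (/ d) ^ S m) in *.
    assert (0 <= B) by (apply Rmult_le_pos; [apply Rmult_le_pos|]; auto using pow_le; lra).
    replace ((2 + 3 * Cp * 8 ^ S m) * (/ d) ^ S (S m)) with (2 * (/ d) ^ S (S m) + 3 * / d * B)
      by (unfold B; simpl; ring).
    clearbody B.
    assert (left_coef s d * Rabs (Derive_n (left_bump s d) (S m) x) <= 2 * / d * B)
      by (apply Rmult_le_compat; auto using Rabs_pos; lra).
    assert (right_coef s d * Rabs (Derive_n (right_bump s d) (S m) x) <= 1 * B)
      by (apply Rmult_le_compat; auto using Rabs_pos; lra).
    assert (0 <= (/ d) ^ S (S m)) by (apply pow_le; lra).
    nra.
Qed.

Lemma bump_Derive_n_S_le k : exists K, 0 <= K /\ forall s d z i, 0 < d -> d < s / 2 ->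
  s <= 1 -> (i <= k)%nat ->
  Rabs (Derive_n (left_bump s d) (S i) z) <= K * (/ d * / d) ^ i * / d /\
  Rabs (Derive_n (right_bump s d) (S i) z) <= K * (/ d * / d) ^ i * / d.
Proof.
  destruct (bump_Derive_n_le (S k)) as [Cp [HCp HCpb]].
  exists (Cp * 8 ^ S k). split; [apply Rmult_le_pos; [exact HCp|apply pow_le; lra]|].
  intros s d z i Hd Hds Hs1 Hi.
  pose proof (inv_d_ge2 s d Hd Hds Hs1).
  assert (Hle : Cp * 8 ^ S i * (/ d) ^ S i <= Cp * 8 ^ S k * (/ d * / d) ^ i * / d).
  { rewrite Rpow_mult_distr.
    replace (Cp * 8 ^ S k * ((/ d) ^ i * (/ d) ^ i) * / d)
      with (Cp * (8 ^ S k * (/ d) ^ i) * (/ d) ^ S i) by (simpl; ring).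
    replace (Cp * 8 ^ S i * (/ d) ^ S i) with (Cp * (8 ^ S i * 1) * (/ d) ^ S i) by ring.
    apply Rmult_le_compat_r; [apply pow_le; lra|].
    apply Rmult_le_compat_l; [exact HCp|].
    apply Rmult_le_compat; [apply pow_le; lra|lra|apply Rle_pow; lra || lia|].
    apply pow_R1_Rle. lra. }
  destruct (HCpb s d z (S i) Hd Hds ltac:(lia)). split; lra.
Qed.

Lemma smooth_A_rate_inv s d : 0 < d -> d < s / 2 -> smooth (fun y => / A_rate s d y).
Proof.
  intros Hd Hds. apply smooth_inv; [|now apply smooth_A_rate].
  intros y. apply Rgt_not_eq, A_rate_pos; auto.
Qed.

(* Near the first bump [A' >= 1] and [|A''| ~ d^-3]; near the second [|A''| ~ d^-2] and
   [1/A' <= 2/d]. In both cases [1/A'] has derivatives of order [d^(-2j-1)]. *)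
Lemma A_rate_inv_Derive_n_le k : exists C, 0 <= C /\ forall s d z j, 0 < d -> d < s / 2 ->
  s <= 1 -> (j <= k)%nat ->
  Rabs (Derive_n (fun x => / A_rate s d x) j z) <= C * (/ d * / d) ^ j * (2 / d).
Proof.
  destruct (bump_Derive_n_S_le k) as [K [HK HKb]].
  destruct (riccati_Derive_n_le k (2 * K) ltac:(lra)) as [C [HC HCb]].
  exists C. split; [exact HC|]. intros s d z j Hd Hds Hs1 Hj.
  pose proof (inv_d_ge2 s d Hd Hds Hs1) as HL.
  assert (HM : 0 <= / d * / d) by nra.
  assert (HMj : 0 <= (/ d * / d) ^ j) by (apply pow_le; exact HM).
  assert (HD : forall i, Derive_n (Derive (A_rate s d)) i z =
    left_coef s d * Derive_n (left_bump s d) (S i) z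
    - right_coef s d * Derive_n (right_bump s d) (S i) z).
  { intros i. rewrite <- Derive_n_S. apply Derive_n_A_rate; auto. lia. }
  pose proof (left_coef_bounds s d Hd Hds). pose proof (left_coef_le s d Hd Hds Hs1).
  pose proof (right_coef_bounds s d Hd Hds).
  assert (0 < d / (2 * s)) by (apply Rdiv_lt_0_compat; lra).
  specialize (HCb (A_rate s d) (fun x => / A_rate s d x) z (/ d * / d)).
  pose proof (smooth_A_rate s d Hd Hds). pose proof (smooth_A_rate_inv s d Hd Hds).
  pose proof (Derive_A_rate_inv s d Hd Hds).
  assert (HKi : forall i, 0 <= K * (/ d * / d) ^ i)
    by (intros; apply Rmult_le_pos; auto using pow_le).
  unfold Rdiv in *.
  destruct (bumps_separated s d Hd Hds z) as [Hq|Hp].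
  - eapply Rle_trans; [apply (HCb (/ d * / d) 1); auto; try lra|].
    + intros i Hi. rewrite HD, Hq, Rmult_0_r, Rminus_0_r, Rabs_mult, Rabs_right by lra.
      destruct (HKb s d z i Hd Hds Hs1 Hi) as [Hp _].
      eapply Rle_trans; [apply Rmult_le_compat; [lra|apply Rabs_pos|eassumption|exact Hp]|].
      right. ring.
    + pose proof (A_rate_inv_le1 s d Hd Hds z Hq). pose proof (A_rate_pos s d Hd Hds z).
      rewrite Rabs_right; [lra|]. left. now apply Rinv_0_lt_compat.
    + rewrite Rmult_1_r. pose proof (Rmult_le_pos _ _ HC HMj). nra.
  - apply (HCb (/ d) (2 * / d)); auto; try nra.
    + intros i Hi. rewrite HD, Hp, Rmult_0_r, Rminus_0_l, Rabs_Ropp, Rabs_mult, Rabs_right by lra.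
      destruct (HKb s d z i Hd Hds Hs1 Hi) as [_ Hq].
      pose proof (HKi i). pose proof (Rabs_pos (Derive_n (right_bump s d) (S i) z)).
      assert (right_coef s d <= 1) by lra. nra.
    + pose proof (A_rate_inv_le s d Hd Hds Hs1 z). pose proof (A_rate_pos s d Hd Hds z).
      rewrite Rabs_right; [lra|]. left. now apply Rinv_0_lt_compat.
Qed.

Lemma pow_inv_d_le d a b : 0 < d -> d <= 1 -> (a <= b)%nat -> (/ d) ^ a <= (/ d) ^ b.
Proof.
  intros Hd Hd1 Hab. apply Rle_pow; [|exact Hab].
  rewrite <- Rinv_1. apply Rinv_le_contravar; lra.
Qed.

Lemma A_map_inverse s d : 0 < d -> d < s / 2 ->
  {h : R -> R | (forall y, A_map s d (h y) = y) /\ (forall x, h (A_map s d x) = x)}.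
Proof.
  intros Hd Hds.
  apply (exists_inverse _ (A_rate s d) (d / (2 * s)) ltac:(apply Rdiv_lt_0_compat; lra)
    (is_derive_A_map s d Hd Hds) (A_map_incr s d Hd Hds) s); [lra|].
  intros y. pose proof (a_map_range s d Hd Hds y). pose proof (a_map_range s d Hd Hds (y - s)).
  unfold A_map. lra.
Qed.

Section Inverse_of_A_map.

Variables (s d : R) (h : R -> R).
Hypotheses (Hd : 0 < d) (Hds : d < s / 2) (Hh : forall y, A_map s d (h y) = y).

Lemma is_derive_A_map_inverse y : is_derive h y (/ A_rate s d (h y)).
Proof.
  apply (is_derive_inverse (A_map s d) (A_rate s d) (d / (2 * s)));
    auto using is_derive_A_map, A_map_incr.
  - apply Rdiv_lt_0_compat; lra.
  - apply Rgt_not_eq, A_rate_pos; auto.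
Qed.

Lemma smooth_A_map_inverse : smooth h.
Proof.
  apply (smooth_flow (fun y => / A_rate s d y)); [apply smooth_A_rate_inv; auto|].
  apply is_derive_A_map_inverse.
Qed.

Lemma A_map_inverse_le y1 y2 : y1 <= y2 -> h y1 <= h y2.
Proof.
  apply (inverse_le (A_map s d) (d / (2 * s))); [apply Rdiv_lt_0_compat; lra| |exact Hh].
  now apply A_map_incr.
Qed.

End Inverse_of_A_map.

Lemma A_map_Derive_n_S_le m : exists C, 0 <= C /\ forall s d x, 0 < d -> d < s / 2 -> s <= 1 ->
  Rabs (Derive_n (A_map s d) (S m) x) <= C * (/ d) ^ (S m * S m).
Proof.
  destruct (A_rate_Derive_n_le m) as [C [HC HCb]]. exists C. split; [exact HC|].
  intros s d x Hd Hds Hs1. pose proof (inv_d_ge2 s d Hd Hds Hs1).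
  rewrite Derive_n_S, (Derive_n_ext _ (A_rate s d))
    by (intros; apply is_derive_unique, is_derive_A_map; auto).
  eapply Rle_trans; [apply HCb; auto|].
  apply Rmult_le_compat_l; [exact HC|]. apply pow_inv_d_le; lra || nia.
Qed.

Lemma A_map_inverse_Derive_n_S_le m : exists C, 0 <= C /\ forall s d h x, 0 < d -> d < s / 2 ->
  s <= 1 -> (forall y, A_map s d (h y) = y) ->
  Rabs (Derive_n h (S m) x) <= C * (/ d) ^ (S m * S m).
Proof.
  destruct (A_rate_inv_Derive_n_le m) as [Cr [HCr HCrb]].
  destruct (flow_Derive_le m 0 Cr HCr) as [CQ [HCQ HCQb]].
  exists (CQ * 2 ^ S m). split; [apply Rmult_le_pos; [exact HCQ|apply pow_le; lra]|].
  intros s d h x Hd Hds Hs1 Hh. pose proof (inv_d_ge2 s d Hd Hds Hs1).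
  pose proof (smooth_A_rate_inv s d Hd Hds) as Hr.
  rewrite (Derive_n_flow _ _ Hr (is_derive_A_map_inverse s d h Hd Hds Hh)).
  change (flow_Derive _ m (h x)) with (Derive_n (flow_Derive (fun y => / A_rate s d y) m) 0 (h x)).
  eapply Rle_trans; [apply (HCQb _ (/ d * / d) (2 / d) (h x) Hr); [nra| |lia]|].
  { intros j Hj. apply HCrb; auto. }
  replace (/ d * / d * (2 / d)) with (2 * (/ d) ^ 3) by (simpl; field; lra).
  rewrite pow_O, Rmult_1_r, Rpow_mult_distr, <- pow_mult.
  replace (CQ * (2 ^ m * (/ d) ^ (3 * m) * (2 / d)))
    with (CQ * 2 ^ S m * (/ d) ^ (3 * m + 1)) by (rewrite pow_add; simpl; field; lra).
  apply Rmult_le_compat_l; [apply Rmult_le_pos; [exact HCQ|apply pow_le; lra]|].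
  apply pow_inv_d_le; lra || nia.
Qed.

Lemma A_map_inverse_Derive_n_le i : exists rho, 0 <= rho /\ forall s d h x, 0 < d -> d < s / 2 ->
  s <= 1 -> (forall y, A_map s d (h y) = y) -> 0 <= A_map s d x <= 1 -> 0 <= h x <= 1 ->
  Rabs (Derive_n (A_map s d) i x) <= rho * (/ d) ^ (i * i) /\
  Rabs (Derive_n h i x) <= rho * (/ d) ^ (i * i).
Proof.
  destruct i as [|m].
  - exists 1. split; [lra|]. intros s d h x _ _ _ _ HA Hh. simpl.
    rewrite !Rabs_right by lra. lra.
  - destruct (A_map_Derive_n_S_le m) as [CA [HCA HCAb]].
    destruct (A_map_inverse_Derive_n_S_le m) as [Ch [HCh HChb]].
    exists (CA + Ch). split; [lra|]. intros s d h x Hd Hds Hs1 Hh _ _.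
    pose proof (pow_le (/ d) (S m * S m) ltac:(left; now apply Rinv_0_lt_compat)).
    pose proof (HCAb s d x Hd Hds Hs1). pose proof (HChb s d h x Hd Hds Hs1 Hh).
    split; nra.
Qed.

Lemma A_map_Cn_le n : exists rho, forall s d h, 0 < d -> d < s / 2 -> s <= 1 ->
  (forall y, A_map s d (h y) = y) ->
  (forall x, 0 <= x <= 1 -> 0 <= A_map s d x <= 1) -> (forall x, 0 <= x <= 1 -> 0 <= h x <= 1) ->
  Cn_le n (A_map s d) h (rho / d ^ (n * n)).
Proof.
  destruct (exists_bound_upto (fun i rho => forall s d h x, 0 < d -> d < s / 2 -> s <= 1 ->
    (forall y, A_map s d (h y) = y) -> 0 <= A_map s d x <= 1 -> 0 <= h x <= 1 ->
    Rabs (Derive_n (A_map s d) i x) <= rho * (/ d) ^ (i * i) /\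
    Rabs (Derive_n h i x) <= rho * (/ d) ^ (i * i))) with (n := n) as [rho [Hrho Hb]].
  - intros i rho rho' Hle Hb s d h x Hd Hds Hs1 Hh HA Hhx.
    pose proof (pow_le (/ d) (i * i) ltac:(left; now apply Rinv_0_lt_compat)).
    destruct (Hb s d h x Hd Hds Hs1 Hh HA Hhx). split; nra.
  - intros i. destruct (A_map_inverse_Derive_n_le i) as [rho [_ Hb]]. now exists rho.
  - exists rho. intros s d h Hd Hds Hs1 Hh HA Hhx.
    unfold Rdiv. rewrite <- pow_inv.
    split; intros i x Hi Hx; destruct (Hb i Hi s d h x Hd Hds Hs1 Hh (HA x Hx) (Hhx x Hx));
      (eapply Rle_trans; [eassumption|]); apply Rmult_le_compat_l; auto;
      apply pow_inv_d_le; lra || nia.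
Qed.

Lemma le_mono_unit_interval f : (forall x y, x <= y -> f x <= f y) -> f 0 = 0 -> f 1 = 1 ->
  forall x, 0 <= x <= 1 -> 0 <= f x <= 1.
Proof.
  intros Hf H0 H1 x Hx. rewrite <- H0, <- H1. split; apply Hf; lra.
Qed.

Lemma A_map_1 s d N : 0 < d -> d < s / 2 -> s * INR N = 1 -> A_map s d 1 = 1.
Proof.
  intros Hd Hds HN. unfold A_map.
  replace (a_map s d 1) with (a_map s d 0); [rewrite a_map_0; auto; ring|].
  rewrite <- HN, <- (Rplus_0_l (s * INR N)), INR_IZR_INZ.
  now rewrite (periodic_Z _ _ (a_map_periodic s d Hd Hds)).
Qed.

Theorem lemma3p3 :
  exists rho : nat -> R,
  forall s delta : R,
    0 < s -> 0 < delta ->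
    (exists N : nat, s * INR N = 1) ->
    delta < s / 2 ->
    exists (A Ainv a : R -> R),
      diffeo01 A Ainv /\
      (* (1) *)
      (forall x, A x = x + a x) /\ smooth a /\ (forall x, 0 <= a x) /\
      periodic a s /\
      (* (2) *)
      A 0 = 0 /\ A delta = s - delta /\ A s = s /\
      (* (3) *)
      (forall x, delta / (2 * s) <= Derive A x <= 2 * s / delta) /\
      (* (4) *)
      (forall n : nat, Cn_le n A Ainv (rho n / delta ^ (n * n))).
Proof.
  exists (fun n => proj1_sig (constructive_indefinite_description _ (A_map_Cn_le n))).
  intros s d Hs Hd [N HN] Hds.
  assert (Hs1 : s <= 1).
  { destruct N as [|N]; [simpl in HN; lra|]. rewrite S_INR in HN. pose proof (pos_INR N). nra. }
  destruct (A_map_inverse s d Hd Hds) as [h [Hh1 Hh2]].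
  assert (HA0 : A_map s d 0 = 0) by (unfold A_map; rewrite a_map_0; auto; ring).
  pose proof (A_map_1 s d N Hd Hds HN) as HA1.
  assert (HA01 : forall x, 0 <= x <= 1 -> 0 <= A_map s d x <= 1).
  { apply le_mono_unit_interval; auto. intros x y Hxy.
    pose proof (A_map_incr s d Hd Hds x y Hxy).
    assert (0 < d / (2 * s)) by (apply Rdiv_lt_0_compat; lra). nra. }
  assert (Hh01 : forall x, 0 <= x <= 1 -> 0 <= h x <= 1).
  { apply le_mono_unit_interval; [exact (A_map_inverse_le s d h Hd Hds Hh1)| |];
      [rewrite <- HA0 at 1|rewrite <- HA1 at 1]; apply Hh2. }
  exists (A_map s d), h, (a_map s d).
  refine (conj _ (conj (fun x => eq_refl) (conj (smooth_a_map s d Hd Hds)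
    (conj (fun x => proj1 (a_map_range s d Hd Hds x)) (conj (a_map_periodic s d Hd Hds)
    (conj HA0 (conj _ (conj _ (conj _ _))))))))).
  - exact (conj (smooth_A_map s d Hd Hds) (conj (smooth_A_map_inverse s d h Hd Hds Hh1)
      (conj Hh2 (conj Hh1 (conj HA01 Hh01))))).
  - unfold A_map. rewrite a_map_d by auto. ring.
  - unfold A_map. rewrite a_map_s by auto. ring.
  - intros x. rewrite (is_derive_unique _ _ _ (is_derive_A_map s d Hd Hds x)).
    apply A_rate_bounds; auto.
  - intros n. destruct (constructive_indefinite_description _ (A_map_Cn_le n)) as [rho Hrho].
    simpl. apply Hrho; auto.
Qed.
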